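(* In the setting described in the context (BFL with Byzantine agents, under hypotheses (i) and (ii)), for every non-faulty agent $i\in\{1,\dots,n-\phi\}$ and every $\theta\neq\theta^*$, $$\frac{1}{t^2}\sum_{r=1}^{t}\Big(\sum_{j=1}^{n-\phi}\Phi_{ij}(t,r+1)\sum_{k=1}^{r}\mathcal{L}^j_k(\theta,\theta^* )-r\sum_{j=1}^{n-\phi}\pi_j(r+1)H_j(\theta,\theta^* )\Big)\longrightarrow 0\quad\text{almost surely as }t\to\infty.$$
   Context: Setting: $n$ agents on a directed graph $G=(\mathcal{V},\mathcal{E})$, $\mathcal{V}=\{1,\dots,n\}$, $\mathcal{I}_i$ the incoming neighbors of $i$; synchronous iterations $t=1,2,\dots$; an unknown set $\mathcal{F}$ of $\phi\le f$ Byzantine agents behaving arbitrarily (arbitrary, inconsistent messages, full knowledge, collusion); the non-faulty agents are indexed $1,\dots,n-\phi$; missing messages are replaced by a default value. Finite hypothesis set $\Theta=\{\theta_1,\dots,\theta_m\}$ with true state $\theta^*$. Agent $i$ has finite signal space $\mathcal{S}_i$ and likelihoods $\ell_i(\cdot\mid\theta)$ with full support; in iteration $t$ it observes $s_t^i\sim\ell_i(\cdot\mid\theta^* )$, independent across agents and iterations. $\ell_i(s_{1,t}^i\mid\theta)=\prod_{r=1}^t\ell_i(s_r^i\mid\theta)$. Define $\mathcal{L}^j_k(\theta,\theta^* )=\log\frac{\ell_j(s_k^j\mid\theta)}{\ell_j(s_k^j\mid\theta^* )}$ and $H_j(\theta,\theta^* )=\sum_{w\in\mathcal{S}_j}\ell_j(w\mid\theta^*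 )\log\frac{\ell_j(w\mid\theta)}{\ell_j(w\mid\theta^* )}=-D(\ell_j(\cdot\mid\theta^* )\|\ell_j(\cdot\mid\theta))$. An $m$-dimensional reduced graph of $G$ is obtained by removing all faulty nodes and their incident links and then, for each non-faulty node, removing up to $mf$ additional incoming links; a source component is a strongly connected component with no incoming links from outside it. Hypotheses: (i) every $m$-dimensional reduced graph of $G$ has a unique source component; (ii) for every $\theta\ne\theta^*$ and every $m$-dimensional reduced graph $\mathcal{H}$ with source component $\mathcal{S}_{\mathcal{H}}$, $\sum_{j\in\mathcal{S}_{\mathcal{H}}}D(\ell_j(\cdot\mid\theta^* )\|\ell_j(\cdot\mid\theta))\neq0$. Let $\chi$ be the number of $m$-dimensional reduced graphs of $G$. Algorithm BFL: One-Iter at agent $i$ with input $x^i\in\mathbb{R}^m$ transmits $x^i$, receives the multiset $R^i$ from incoming neighbors, forms $Z^i$ by adding, for every sub-multiset $C\subseteq R^i\cup\{x^i\}$ of size $(m+1)f+1$, a Tverberg point of $C$ (a point in $\bigcap_{k=1}^{f+1}\mathrm{Conv}(Y_k)$ for a partition of $C$ into $f+1$ nonempty parts with nonempty such intersection), and returns $\frac{1}{1+|Z^i|}(x^i+\sum_{z\in Z^i}z)$. BFL initializes $\mu_0^i$ uniform on $\Theta$ and in iteration $t$ sets $\eta_t^i=\text{One-Iter}(\log\mu_{t-1}^i)$, observes $s_t^i$, and sets $\mu_t^i(\theta)\propto\ell_i(s_{1,t}^i\mid\theta)\exp(\eta_t^i(\theta))$ (normalized over $\Theta$). Matrix representation (known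 property of One-Iter under hypothesis (i)): for each $t\ge1$ there is a (random) row-stochastic matrix $\mathbf{A}[t]\in\mathbb{R}^{(n-\phi)\times(n-\phi)}$ with $\eta_t^i(\theta)=\sum_{j=1}^{n-\phi}\mathbf{A}_{ij}[t]\log\mu_{t-1}^j(\theta)$ for all non-faulty $i$ and all $\theta$, and $\mathbf{A}[t]\ge\beta\mathbf{H}[t]$ entrywise for the adjacency matrix $\mathbf{H}[t]$ of some $m$-dimensional reduced graph, where $0<\beta\le1$ depends only on $G$. Let $\Phi(t,r)=\mathbf{A}[t]\mathbf{A}[t-1]\cdots\mathbf{A}[r]$ for $1\le r\le t$ and $\Phi(t,t+1)=\mathbf{I}$. Then $\lim_{t\to\infty}\Phi(t,r)=\mathbf{1}\pi(r)$ for a stochastic row vector $\pi(r)\in\mathbb{R}^{n-\phi}$, and $|\Phi_{ij}(t,r)-\pi_j(r)|\le(1-\beta^{\nu})^{\lceil (t-r+1)/\nu\rceil}$ for all $t\ge r\ge1$, where $\nu=\chi(n-\phi)$. $\Phi_{ij}$ and $\pi_j$ refer to these objects. *)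

From HB Require Import structures.
From mathcomp Require Import all_boot all_order all_algebra.
From mathcomp Require Import all_classical all_reals all_analysis.
Set Implicit Arguments. Unset Strict Implicit. Unset Printing Implicit Defensive.
Import Order.TTheory GRing.Theory Num.Theory.
Local Open Scope ring_scope.
Local Open Scope classical_set_scope.

(* Phi_of A t r = A t *m A (t-1) *m ... *m A r  for 1 <= r <= t,
   and the identity when r = t+1 (and, by convention, for r > t). *)
Fixpoint Phi_of (R : realType) (N : nat) (A : nat -> 'M[R]_N) (t r : nat)
  : 'M[R]_N :=
  match t with
  | 0 => 1%:M
  | t'.+1 => if (r <= t'.+1)%N then A t'.+1 *m Phi_of A t' r else 1%:M
  end.

Definition row_stochastic (R : realType) (N : nat) (M : 'M[R]_N) : Prop :=
  (forall i j, 0 <= M i j) /\ (forall i, \sum_j M i j = 1).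

Definition stochastic_row (R : realType) (N : nat) (v : 'rV[R]_N) : Prop :=
  (forall j, 0 <= v 0 j) /\ \sum_j v 0 j = 1.

Definition llr (R : realType) (Th : finType) (S : finType)
  (l : Th -> S -> R) (th ths : Th) (w : S) : R :=
  ln (l th w / l ths w).

Definition Hdiv (R : realType) (Th : finType) (S : finType)
  (l : Th -> S -> R) (th ths : Th) : R :=
  \sum_(w : S) l ths w * ln (l th w / l ths w).

(* Signals s j k (agent j, iteration k >= 1) are mutually independent across
   agents and iterations, and s j k has law l j ths: for every finite family
   of distinct indices (j,k) (k >= 1) and every choice of values, the joint
   probability is the product of the marginal likelihoods. *)
Definition iid_signals (R : realType) (d : measure_display)
  (Omega : measurableType d) (P : probability Omega R) (N : nat)
  (Th : finType) (S : 'I_N -> finType) (l : forall j, Th -> S j -> R)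
  (ths : Th) (s : forall j, nat -> Omega -> S j) : Prop :=
  (forall j k (w : S j), measurable [set om | s j k om = w]) /\
  (forall (F : seq ('I_N * nat)) (w : forall x : 'I_N * nat, S x.1),
     uniq F -> all (fun x => (0 < x.2)%N) F ->
     P (\bigcap_(x in [set x | x \in F]) [set om | s x.1 x.2 om = w x])
     = (\prod_(x <- F) l x.1 ths (w x))%:E).

From HB Require Import structures.
From mathcomp Require Import all_boot all_order all_algebra.
From mathcomp Require Import all_classical all_reals all_analysis.
From mathcomp Require Import ring lra zify.
Import Order.TTheory GRing.Theory Num.Theory.
Import numFieldNormedType.Exports.
Local Open Scope ring_scope.
Local Open Scope classical_set_scope.
Set Implicit Arguments. Unset Strict Implicit. Unset Printing Implicit Defensive.

(* The r-th summand splits as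
     sum_j (Phi_ij(t,r+1) - pi_j(r+1)) S_j(r) + sum_j pi_j(r+1) (S_j(r) - r H_j),
   where S_j(r) is the accumulated log-likelihood ratio of agent j.  Since
   |S_j(r)| <= r L_j with L_j = sum_w |llr_j(w)|, the first part is at most
   t c(t-r) sum_j L_j, with c the geometric mixing rate; the second is at most
   t sum_j |S_j(r)/r - H_j|.  After division by t^2 only Cesaro means of null
   sequences remain: c(m) -> 0, and S_j(r)/r -> H_j almost surely by the strong
   law of large numbers for the bounded centred i.i.d. increments llr - H_j.
   The strong law follows from the fourth-moment method: a centred walk D_r with
   increments bounded by B has E[D_r^4] <= 3 r^2 B^4, so Markov's inequality
   gives P(|D_r| > r e) <= 3 B^4 / (e^4 r^2), which is summable, and
   Borel-Cantelli concludes. *)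

Lemma cvg0_of_eventually_le (R : realType) (u : R ^nat) :
  (forall m : nat, \forall r \near \oo, `|u r| <= r%:R / m.+1%:R) ->
  (fun r => r%:R^-1 * u r) @ \oo --> 0.
Proof.
move=> u_le; apply/cvgrPdist_le => e e_gt0.
have [m _ hm] := u_le (Num.bound e^-1).
exists m => // r /= /hm u_r_le; rewrite sub0r normrN normrM.
have [->|r_gt0] := posnP r; first by rewrite invr0 normr0 mul0r ltW.
rewrite ger0_norm ?invr_ge0 //.
apply: le_trans (ler_wpM2l _ u_r_le) _; first by rewrite invr_ge0.
rewrite mulrA mulVf ?pnatr_eq0 -?lt0n // mul1r -[leRHS]invrK.
rewrite lef_pV2 ?posrE ?invr_gt0 ?ltr0n //.
by rewrite (le_trans (ltW (archi_boundP _))) ?ler_nat ?invr_ge0 ?ltW.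
Qed.

Lemma sum_inv_sqr_le2 (R : realType) k :
  \sum_(i < k) (i.+1%:R ^+ 2)^-1 <= 2 :> R.
Proof.
pose f i : R := - i.+1%:R^-1.
have tele i : (i.+1%:R ^+ 2)^-1 <= 2 * (f i.+1 - f i).
  have q_ge1 : 1 <= i.+1%:R :> R by rewrite ler1n.
  have q_gt0 : 0 < i.+1%:R :> R by rewrite ltr0n.
  rewrite -subr_ge0 /f -[i.+2%:R]natr1.
  have -> : 2 * (- (i.+1%:R + 1)^-1 - - i.+1%:R^-1) - (i.+1%:R ^+ 2)^-1 =
            (i.+1%:R - 1) / (i.+1%:R ^+ 2 * (i.+1%:R + 1)) :> R.
    by field; rewrite nat1r natr1 !pnatr_eq0.
  by rewrite divr_ge0 ?subr_ge0 // mulr_ge0 ?addr_ge0 ?ltW.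
apply: le_trans (ler_sum _ (fun (i : 'I_k) _ => tele i)) _; rewrite -mulr_sumr.
rewrite -(big_mkord xpredT (fun i => f i.+1 - f i)) telescope_sumr // /f.
by rewrite invr1 opprK ler_piMr // addrC subr_le0 invf_le1 ?ler1n ?ltr0n.
Qed.

Lemma cvg_mean0 (R : realType) (b : R ^nat) : b @ \oo --> 0 ->
  (fun t => t%:R^-1 * \sum_(m < t) b m) @ \oo --> 0.
Proof.
move=> /cesaro b_mean0; rewrite -cvg_shiftS.
move: b_mean0; rewrite /arithmetic_mean /series /=.
by under eq_fun do rewrite big_mkord.
Qed.

Lemma cvg_expr_ceil_div (R : realType) (g : R) (nu : nat) :
  0 <= g -> g < 1 -> (0 < nu)%N ->
  (fun m => g ^+ ((m + nu - 1) %/ nu)) @ \oo --> 0.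
Proof.
move=> g_ge0 g_lt1 nu_gt0; apply/cvgrPdist_le => e e_gt0.
have g_norm_lt1 : `|g| < 1 by rewrite ger0_norm.
have /cvgrPdist_le/(_ e e_gt0)[K _ hK] := cvg_expr g_norm_lt1.
exists (K * nu)%N => // m /= Km; apply: hK => /=.
by rewrite leq_divRL // (leq_trans Km) // -addnBA // leq_addr.
Qed.

Lemma ler_term_sum (R : numDomainType) (I : finType) (F : I -> R) i :
  (forall j, 0 <= F j) -> F i <= \sum_j F j.
Proof.
by move=> F_ge0; rewrite (bigD1 i) //= lerDl sumr_ge0 // => j _; apply: F_ge0.
Qed.

Section WalkMoments.
Variables (R : realType) (T : finType) (p x : T -> R).

Definition ffun_cons r (a : T) (w : {ffun 'I_r -> T}) : {ffun 'I_r.+1 -> T} :=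
  [ffun k => if unlift ord0 k is Some k' then w k' else a].

Lemma ffun_cons0 r a (w : {ffun 'I_r -> T}) : ffun_cons a w ord0 = a.
Proof. by rewrite ffunE unlift_none. Qed.

Lemma ffun_consS r a (w : {ffun 'I_r -> T}) k : ffun_cons a w (lift ord0 k) = w k.
Proof. by rewrite ffunE liftK. Qed.

Lemma big_ffunS r (F : {ffun 'I_r.+1 -> T} -> R) :
  \sum_w F w = \sum_(a : T) \sum_(w : {ffun 'I_r -> T}) F (ffun_cons a w).
Proof.
rewrite pair_big /= (reindex (fun q : T * {ffun 'I_r -> T} => ffun_cons q.1 q.2)) //.
exists (fun w : {ffun 'I_r.+1 -> T} => (w ord0, [ffun k => w (lift ord0 k)])).
  move=> [a w] _ /=.
  by rewrite ffun_cons0; congr (_, _); apply/ffunP => k; rewrite ffunE ffun_consS.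
move=> w _ /=; apply/ffunP => k; rewrite ffunE.
by case: unliftP => [k'|] ->; rewrite ?ffunE.
Qed.

(* E[g (x w_1 + ... + x w_r)] for w_1, ..., w_r i.i.d. of law p, as a finite
   sum over sample paths. *)
Definition walk_expect r (g : R -> R) :=
  \sum_(w : {ffun 'I_r -> T}) (\prod_(k < r) p (w k)) * g (\sum_(k < r) x (w k)).

Lemma walk_expect0 g : walk_expect 0 g = g 0.
Proof.
rewrite /walk_expect; under eq_bigr => w _ do rewrite !big_ord0 mul1r.
by rewrite sumr_const card_ffun card_ord expn0 mulr1n.
Qed.

Lemma walk_expectS r g :
  walk_expect r.+1 g = \sum_a p a * walk_expect r (fun y => g (x a + y)).
Proof.
rewrite /walk_expect big_ffunS; apply: eq_bigr => a _; rewrite mulr_sumr.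
apply: eq_bigr => w _; rewrite big_ord_recl [in X in g X]big_ord_recl ffun_cons0.
under eq_bigr => k _ do rewrite ffun_consS.
by under [in X in g X]eq_bigr => k _ do rewrite ffun_consS; rewrite mulrA.
Qed.

Lemma walk_expect_ext r g1 g2 :
  (forall y, g1 y = g2 y) -> walk_expect r g1 = walk_expect r g2.
Proof. by move=> e; apply: eq_bigr => w _; rewrite e. Qed.

Definition walk_moment r k := walk_expect r (fun y => y ^+ k).

Lemma walk_expect_poly r m (c : 'I_m -> R) :
  walk_expect r (fun y => \sum_(i < m) c i * y ^+ i) =
  \sum_(i < m) c i * walk_moment r i.
Proof.
rewrite /walk_expect; under eq_bigr do rewrite mulr_sumr.
rewrite exchange_big; apply: eq_bigr => i _; rewrite mulr_sumr.
by apply: eq_bigr => w _; rewrite mulrCA.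
Qed.

Lemma walk_moment0n k : walk_moment 0 k = (k == 0)%:R.
Proof. by rewrite /walk_moment walk_expect0 expr0n. Qed.

Lemma walk_momentS r k c :
  (forall a y, (x a + y) ^+ k = \sum_(i < k.+1) c a i * y ^+ i) ->
  walk_moment r.+1 k = \sum_a p a * \sum_(i < k.+1) c a i * walk_moment r i.
Proof.
move=> expand; rewrite /walk_moment walk_expectS; apply: eq_bigr => a _.
by rewrite (walk_expect_ext _ (expand a)) walk_expect_poly.
Qed.

Hypotheses (p_sum1 : \sum_a p a = 1) (x_mean0 : \sum_a p a * x a = 0).

Let variance := \sum_a p a * x a ^+ 2.

Lemma walk_momentn0 r : walk_moment r 0 = 1.
Proof.
elim: r => [|r IH]; first by rewrite walk_moment0n.
rewrite (@walk_momentS _ _ (fun _ _ => 1)) => [|a y]; last by rewrite big_ord1 !mul1r.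
by rewrite -[RHS]p_sum1; apply: eq_bigr => a _; rewrite big_ord1 IH !mulr1.
Qed.

Lemma walk_momentn1 r : walk_moment r 1 = 0.
Proof.
elim: r => [|r IH]; first by rewrite walk_moment0n.
rewrite (@walk_momentS _ _ (fun a i => [:: x a; 1]`_i)) => [|a y]; last first.
  by rewrite !big_ord_recl big_ord0 /=; ring.
rewrite -[RHS]x_mean0; apply: eq_bigr => a _.
by rewrite !big_ord_recl big_ord0 /= IH walk_momentn0; ring.
Qed.

Lemma walk_momentn2 r : walk_moment r 2 = r%:R * variance.
Proof.
elim: r => [|r IH]; first by rewrite walk_moment0n mul0r.
rewrite (@walk_momentS _ _ (fun a i => [:: x a ^+ 2; 2 * x a; 1]`_i)) => [|a y].
  2: by rewrite !big_ord_recl big_ord0 /bump /=; ring.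
rewrite (eq_bigr (fun a => p a * x a ^+ 2 + r%:R * variance * p a)) => [|a _].
  by rewrite big_split /= -mulr_sumr p_sum1 -/variance; ring.
by rewrite !big_ord_recl big_ord0 /bump /= IH walk_momentn1 walk_momentn0; ring.
Qed.

Lemma walk_moment4S r : walk_moment r.+1 4 =
  \sum_a p a * x a ^+ 4 + 6 * r%:R * variance ^+ 2 + walk_moment r 4.
Proof.
rewrite (@walk_momentS _ _
  (fun a i => [:: x a ^+ 4; 4 * x a ^+ 3; 6 * x a ^+ 2; 4 * x a; 1]`_i)) => [|a y].
  2: by rewrite !big_ord_recl big_ord0 /bump /=; ring.
rewrite (eq_bigr (fun a => p a * x a ^+ 4 + 6 * r%:R * variance * (p a * x a ^+ 2)
    + 4 * walk_moment r 3 * (p a * x a) + walk_moment r 4 * p a)) => [|a _].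
  by rewrite !big_split /= -!mulr_sumr p_sum1 x_mean0 -/variance; ring.
rewrite !big_ord_recl big_ord0 /bump /= walk_momentn0 walk_momentn1 walk_momentn2.
ring.
Qed.

Variable B : R.
Hypotheses (p_ge0 : forall a, 0 <= p a) (x_bound : forall a, `|x a| <= B).

Lemma walk_moment4_le r : walk_moment r 4 <= 3 * r%:R ^+ 2 * B ^+ 4.
Proof.
have x2_le a : x a ^+ 2 <= B ^+ 2.
  by rewrite -real_normK ?num_real // lerXn2r ?nnegrE // (le_trans _ (x_bound a)).
have expect_le k (g : T -> R) :
    (forall a, g a <= B ^+ k) -> \sum_a p a * g a <= B ^+ k.
  move=> gB; rewrite -[leRHS]mul1r -p_sum1 mulr_suml.
  by apply: ler_sum => a _; apply: ler_wpM2l.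
have V_ge0 : 0 <= variance by apply: sumr_ge0 => a _; rewrite mulr_ge0 ?sqr_ge0.
have V_le : variance <= B ^+ 2 by apply: expect_le.
have x4_le : \sum_a p a * x a ^+ 4 <= B ^+ 4.
  apply: expect_le => a; rewrite -[4%N]/(2 * 2)%N !exprM.
  by rewrite lerXn2r ?nnegrE ?sqr_ge0 ?x2_le.
elim: r => [|r IH]; first by rewrite walk_moment0n expr0n mulr0 mul0r.
have B4_ge0 : 0 <= B ^+ 4 by rewrite exprn_even_ge0.
have V2_le : r%:R * variance ^+ 2 <= r%:R * B ^+ 4.
  by rewrite ler_wpM2l // -[4%N]/(2 * 2)%N exprM lerXn2r ?nnegrE ?sqr_ge0.
rewrite walk_moment4S -natr1; lra.
Qed.
End WalkMoments.

Lemma measure_bigsetU_le d (T : measurableType d) (R : realType)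
    (mu : {measure set T -> \bar R}) (I : Type) (s : seq I) (Q : pred I)
    (F : I -> set T) :
  (forall i, measurable (F i)) ->
  (mu (\big[setU/set0]_(i <- s | Q i) F i) <= \sum_(i <- s | Q i) mu (F i))%E.
Proof.
move=> F_meas; elim: s => [|i s IH]; first by rewrite !big_nil measure0.
rewrite !big_cons; case: (Q i) => //.
apply: le_trans (measureU2 _ (F_meas i) _) (leeD (lexx _) IH).
by apply: bigsetU_measurable => j _; apply: F_meas.
Qed.

Section StrongLaw.
Variables (R : realType) (d : measure_display) (Omega : measurableType d).
Variables (P : probability Omega R) (T : finType) (X : nat -> Omega -> T).
Variables (p x : T -> R).

Definition cylinder r (w : {ffun 'I_r -> T}) : set Omega :=
  [set om | forall k : 'I_r, X k.+1 om = w k].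

Hypothesis X_measurable : forall k a, measurable [set om | X k om = a].
(* The law of X_1, ..., X_r, stated at the values taken at some om0: this is
   the form in which iid_signals provides it, its value assignments being
   dependently typed. *)
Hypothesis P_cylinder : forall r om0,
  P [set om | forall k : 'I_r, X k.+1 om = X k.+1 om0] =
  (\prod_(k < r) p (X k.+1 om0))%:E.
Hypothesis p_ge0 : forall a, 0 <= p a.

Lemma cylinder_measurable r (w : {ffun 'I_r -> T}) : measurable (cylinder w).
Proof.
have -> : cylinder w = \bigcap_(k in [set` enum 'I_r]) [set om | X k.+1 om = w k].
  apply/seteqP; split => om /= om_w k; first by move=> _; apply: om_w.
  by apply: om_w; rewrite /= mem_enum.
by rewrite bigcap_seq; apply: bigsetI_measurable => k _; apply: X_measurable.
Qed.

Lemma measure_cylinder_le r (w : {ffun 'I_r -> T}) :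
  (P (cylinder w) <= (\prod_(k < r) p (w k))%:E)%E.
Proof.
have [->|/set0P[om0 om0_w]] := eqVneq (cylinder w) set0.
  by rewrite measure0 lee_fin prodr_ge0.
have -> : cylinder w = [set om | forall k : 'I_r, X k.+1 om = X k.+1 om0].
  by apply/seteqP; split => om /= om_w k; rewrite om_w om0_w.
by rewrite P_cylinder; under eq_bigr do rewrite om0_w.
Qed.

Definition walk r om := \sum_(k < r) x (X k.+1 om).

Definition walk_beyond r c : set Omega :=
  \big[setU/set0]_(w : {ffun 'I_r -> T} | c < `|\sum_(k < r) x (w k)|) cylinder w.

Lemma walk_beyond_measurable r c : measurable (walk_beyond r c).
Proof. by apply: bigsetU_measurable => w _; apply: cylinder_measurable. Qed.

Lemma subset_walk_beyond r c : [set om | c < `|walk r om|] `<=` walk_beyond r c.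
Proof.
move=> om /= c_lt; rewrite /walk_beyond -bigcup_seq_cond.
exists [ffun k : 'I_r => X k.+1 om]; last by move=> k; rewrite ffunE.
by rewrite /= mem_index_enum /=; under eq_bigr do rewrite ffunE.
Qed.

Lemma measure_walk_beyond_le r c : 0 < c ->
  (P (walk_beyond r c) <= (walk_moment p x r 4 / c ^+ 4)%:E)%E.
Proof.
move=> c_gt0; apply: le_trans (measure_bigsetU_le P _ _ (@cylinder_measurable r)) _.
apply: le_trans (lee_sum _ (fun w _ => measure_cylinder_le w)) _.
rewrite sumEFin lee_fin /walk_moment /walk_expect mulr_suml.
rewrite [leRHS](bigID (fun w : {ffun 'I_r -> T} => c < `|\sum_(k < r) x (w k)|)) /=.
have fourth_ge0 (y : R) : 0 <= y ^+ 4 by rewrite exprn_even_ge0.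
rewrite -[leLHS]addr0 lerD //; last first.
  apply: sumr_ge0 => w _.
  apply: mulr_ge0; last by rewrite invr_ge0 fourth_ge0.
  by rewrite mulr_ge0 // prodr_ge0.
apply: ler_sum => w c_lt; rewrite -mulrA ler_peMr ?prodr_ge0 //.
rewrite ler_pdivlMr ?exprn_gt0 // mul1r -[leRHS]ger0_norm // normrX.
by rewrite lerXn2r ?nnegrE ?ltW // (lt_trans c_gt0).
Qed.

Hypotheses (p_sum1 : \sum_a p a = 1) (x_mean0 : \sum_a p a * x a = 0).
Variable B : R.
Hypothesis x_bound : forall a, `|x a| <= B.

Lemma walk_eventually_le e : 0 < e ->
  \forall om \ae P, \forall r \near \oo, `|walk r om| <= r%:R * e.
Proof.
move=> e_gt0; pose F i := walk_beyond i.+1 (i.+1%:R * e).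
pose K := 3 * B ^+ 4 / e ^+ 4.
have F_meas i : measurable (F i) by apply: walk_beyond_measurable.
have PF_le i : (P (F i) <= (K * (i.+1%:R ^+ 2)^-1)%:E)%E.
  apply: le_trans (measure_walk_beyond_le _ _) _; first by rewrite mulr_gt0.
  rewrite lee_fin.
  apply: le_trans (ler_wpM2r _ (walk_moment4_le p_sum1 x_mean0 p_ge0 x_bound _)) _.
    by rewrite invr_ge0 exprn_ge0 // mulr_ge0 // ltW.
  rewrite /K exprMn le_eqVlt; apply/orP; left; apply/eqP; field.
  by rewrite nat1r pnatr_eq0 (lt0r_neq0 e_gt0).
have F_summable : (\sum_(0 <= i <oo) P (F i) < +oo)%E.
  apply: (@le_lt_trans _ _ (K * 2)%:E); last exact: ltry.
  apply: lime_le; first by apply: is_cvg_nneseries => i _ _; apply: measure_ge0.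
  apply: nearW => k; apply: le_trans (lee_sum _ (fun i _ => PF_le i)) _.
  rewrite sumEFin lee_fin -mulr_sumr big_mkord ler_wpM2l ?sum_inv_sqr_le2 //.
  apply: divr_ge0; last exact/exprn_ge0/ltW.
  by apply: mulr_ge0 => //; apply: exprn_even_ge0.
exists (lim_sup_set F); split.
- apply: bigcap_measurable => [|k _]; first by exists 0%N.
  by apply: bigcup_measurable => j _; apply: F_meas.
- exact: lim_sup_set_cvg0.
move=> om /= not_ev k _; apply: contra_notP not_ev => not_F.
exists k.+1 => // r /= k_lt_r; rewrite leNgt; apply/negP => walk_gt.
apply: not_F; exists r.-1; first by rewrite /= -ltnS prednK // (leq_trans _ k_lt_r).
by rewrite /F prednK ?(leq_trans _ k_lt_r) //; apply: subset_walk_beyond.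
Qed.

Theorem walk_strong_law :
  \forall om \ae P, (fun r => r%:R^-1 * walk r om) @ \oo --> 0.
Proof.
have /ae_foralln : forall m : nat,
    \forall om \ae P, \forall r \near \oo, `|walk r om| <= r%:R / m.+1%:R.
  by move=> m; apply: walk_eventually_le; rewrite invr_gt0.
by apply: filterS => om walk_le; apply: cvg0_of_eventually_le.
Qed.
End StrongLaw.

Section ConsensusAverage.
Variables (R : realType) (N : nat) (a : nat -> nat -> 'I_N -> R)
  (q : nat -> 'I_N -> R) (S : 'I_N -> nat -> R) (H L : 'I_N -> R) (c : R ^nat).
Hypotheses (c_ge0 : forall m, 0 <= c m) (c_cvg0 : c @ \oo --> 0).
Hypothesis a_near_q :
  forall t r j, (1 <= r <= t)%N -> `|a t r j - q r j| <= c (t - r)%N.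
Hypothesis q_le1 : forall r j, `|q r j| <= 1.
Hypothesis S_le : forall j r, `|S j r| <= r%:R * L j.
Hypothesis S_avg :
  forall j, (fun r => r%:R^-1 * (S j r - r%:R * H j)) @ \oo --> 0.

Lemma consensus_term_le t r : (1 <= r <= t)%N ->
  `|\sum_j a t r j * S j r - r%:R * \sum_j q r j * H j| <=
  t%:R * (c (t - r)%N * \sum_j L j + \sum_j `|r%:R^-1 * (S j r - r%:R * H j)|).
Proof.
case/andP=> r_ge1 r_le_t.
have r_gt0 : 0 < r%:R :> R by rewrite ltr0n.
have r_le : r%:R <= t%:R :> R by rewrite ler_nat.
have L_ge0 j : 0 <= L j.
  by have := S_le j 1; rewrite mul1r; apply: le_trans.
have -> : \sum_j a t r j * S j r - r%:R * \sum_j q r j * H j =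
    \sum_j ((a t r j - q r j) * S j r + q r j * (S j r - r%:R * H j)).
  by rewrite mulr_sumr -sumrB; apply: eq_bigr => j _; ring.
apply: le_trans (ler_norm_sum _ _ _) _.
rewrite mulrDr mulrCA !mulr_sumr -big_split /=; apply: ler_sum => j _.
apply: le_trans (ler_normD _ _) _; rewrite !normrM; apply: lerD.
  apply: ler_pM => //; first by rewrite a_near_q ?r_ge1.
  by rewrite (le_trans (S_le j r)) // ler_wpM2r.
rewrite [`|r%:R^-1|]ger0_norm ?invr_ge0 // mulrA.
apply: ler_pM => //; rewrite (le_trans (q_le1 r j)) //.
by rewrite ler_pdivlMr // mul1r.
Qed.

Theorem consensus_average_cvg0 :
  (fun t => (t%:R ^+ 2)^-1 * \sum_(1 <= r < t.+1)
     (\sum_j a t r j * S j r - r%:R * \sum_j q r j * H j)) @ \oo --> 0.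
Proof.
pose e j r := `|r%:R^-1 * (S j r - r%:R * H j)|.
pose u t := t%:R^-1 * (\sum_(m < t) c m) * \sum_j L j +
            \sum_j t%:R^-1 * \sum_(m < t) e j m.+1.
have u_cvg0 : u @ \oo --> 0.
  rewrite -[0]addr0; apply: cvgD.
    rewrite -[X in _ --> X](mul0r (\sum_j L j)).
    by apply: cvgMr_tmp; exact: cvg_mean0.
  rewrite -[X in _ --> X](@big1_eq R 0 +%R _ (index_enum 'I_N) xpredT).
  apply: (@cvg_big _ _ +%R 0 xpredT add_continuous) => // j _.
  apply: (@cvg_mean0 _ (fun m => e j m.+1)).
  rewrite cvg_shiftS; have := cvg_norm (S_avg j); rewrite normr0; exact.
apply: (@squeeze_cvgr _ _ _ _ (fun t => - u t) u); last exact: u_cvg0; last first.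
  by rewrite -[X in _ --> X]oppr0; exact: (cvgN u_cvg0).
apply: nearW => t; rewrite -ler_norml normrM ger0_norm ?invr_ge0 ?exprn_ge0 //.
have [->|t_gt0] := posnP t.
  rewrite big_geq // normr0 mulr0 /u big_ord0 mulr0 mul0r add0r.
  by rewrite big1 // => j _; rewrite big_ord0 mulr0.
have sum_rev : \sum_(1 <= r < t.+1) c (t - r)%N = \sum_(m < t) c m.
  rewrite big_nat_rev big_add1 /= big_mkord; apply: eq_bigr => m _.
  by congr c; have := ltn_ord m; lia.
have sum_shift j : \sum_(1 <= r < t.+1) e j r = \sum_(m < t) e j m.+1.
  by rewrite big_add1 /= big_mkord.
have t_neq0 : t%:R != 0 :> R by rewrite pnatr_eq0 -lt0n.
have terms_le := @ler_sum_nat _ 1 t.+1 _ _ (fun r => @consensus_term_le t r).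
apply: le_trans (ler_wpM2l _ (le_trans (ler_norm_sum _ _ _) terms_le)) _.
  by rewrite invr_ge0 exprn_ge0.
rewrite -mulr_sumr mulrA expr2 invfM divfK // big_split /= -mulr_suml.
rewrite exchange_big /= sum_rev mulrDr mulrA /u mulr_sumr.
under eq_bigr do rewrite sum_shift.
by rewrite [X in _ + X <= _]mulr_sumr.
Qed.
End ConsensusAverage.

Lemma stochastic_row_entry (R : realType) (N : nat) (v : 'rV[R]_N) j :
  stochastic_row v -> 0 <= v 0 j <= 1.
Proof. by case=> v_ge0 v_sum1; rewrite v_ge0 -v_sum1 ler_term_sum. Qed.

Lemma Phi_of_succ (R : realType) (N : nat) (A : nat -> 'M[R]_N) t :
  Phi_of A t t.+1 = 1%:M.
Proof. by case: t => //= t; rewrite ltnn. Qed.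

Lemma Phi_of_mixing (R : realType) (N : nat) (A : nat -> 'M[R]_N)
    (pi : nat -> 'rV[R]_N) (g : R) (nu : nat) i :
  (0 < nu)%N -> (forall r, (1 <= r)%N -> stochastic_row (pi r)) ->
  (forall t r j, (1 <= r)%N -> (r <= t)%N ->
     `|Phi_of A t r i j - pi r 0 j| <= g ^+ ((t - r + 1 + nu - 1) %/ nu)) ->
  forall t r j, (1 <= r <= t)%N ->
    `|Phi_of A t r.+1 i j - pi r.+1 0 j| <= g ^+ ((t - r + nu - 1) %/ nu).
Proof.
move=> nu_gt0 pi_stoch Phi_mix t r j /andP[_]; rewrite leq_eqVlt.
case/orP=> [/eqP <-|r_lt_t]; last first.
  by have := Phi_mix t r.+1 j isT r_lt_t; rewrite addn1 subnSK.
rewrite Phi_of_succ subnn add0n subn1 divn_small ?ltn_predL // expr0 mxE.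
have /andP[pi_ge0 pi_le1] := stochastic_row_entry j (pi_stoch r.+1 isT).
by rewrite ler_norml; case: (i == j) => /=; apply/andP; split; lra.
Qed.

Lemma iid_signals_cylinder (R : realType) (d : measure_display)
    (Omega : measurableType d) (P : probability Omega R) (N : nat) (Th : finType)
    (S : 'I_N -> finType) (l : forall j, Th -> S j -> R) (ths : Th)
    (s : forall j, nat -> Omega -> S j) :
  iid_signals P l ths s -> forall j r om0,
  P [set om | forall k : 'I_r, s j k.+1 om = s j k.+1 om0] =
  (\prod_(k < r) l j ths (s j k.+1 om0))%:E.
Proof.
move=> [_ P_prod] j r om0; pose F := [seq (j, k.+1) | k <- iota 0 r].
have F_uniq : uniq F by rewrite map_inj_uniq ?iota_uniq // => a b [].
have F_pos : all (fun y => 0 < y.2)%N F by apply/allP => y /mapP[k _ ->].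
have := P_prod F (fun y => s y.1 y.2 om0) F_uniq F_pos.
rewrite big_map -[r in iota 0 r]subn0 -/(index_iota 0 r) big_mkord => <-.
congr (P _).
apply/seteqP; split => om /= om_F.
  move=> y /mapP[k k_in ->] /=; rewrite mem_iota in k_in.
  exact: (om_F (Ordinal k_in)).
by move=> k; apply: (om_F (j, k.+1)); rewrite /= map_f // mem_iota ltn_ord.
Qed.

Section LogLikelihoodRatio.
Variables (R : realType) (Th S : finType) (l : Th -> S -> R) (th ths : Th).
Hypotheses (l_ge0 : forall w, 0 <= l ths w) (l_sum1 : \sum_w l ths w = 1).

Lemma norm_llr_le w : `|llr l th ths w| <= \sum_v `|llr l th ths v|.
Proof. exact: ler_term_sum. Qed.

Lemma norm_Hdiv_le : `|Hdiv l th ths| <= \sum_v `|llr l th ths v|.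
Proof.
apply: le_trans (ler_norm_sum _ _ _) (ler_sum _ _) => w _.
rewrite normrM ger0_norm // ler_piMl // -l_sum1.
exact: ler_term_sum.
Qed.

Lemma llr_centered_mean0 :
  \sum_w l ths w * (llr l th ths w - Hdiv l th ths) = 0.
Proof.
under eq_bigr do rewrite mulrBr.
by rewrite sumrB -mulr_suml l_sum1 mul1r subrr.
Qed.

Lemma norm_sum_llr_le (X : nat -> S) r :
  `|\sum_(1 <= k < r.+1) llr l th ths (X k)| <= r%:R * \sum_v `|llr l th ths v|.
Proof.
apply: le_trans (ler_norm_sum _ _ _) _.
apply: le_trans (ler_sum_nat (fun k _ => norm_llr_le (X k))) _.
by rewrite sumr_const_nat subSS subn0 mulr_natl.
Qed.

Variables (d : measure_display) (Omega : measurableType d).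
Variables (P : probability Omega R) (X : nat -> Omega -> S).
Hypothesis X_measurable : forall k w, measurable [set om | X k om = w].
Hypothesis P_cylinder : forall r om0,
  P [set om | forall k : 'I_r, X k.+1 om = X k.+1 om0] =
  (\prod_(k < r) l ths (X k.+1 om0))%:E.

Theorem llr_strong_law : \forall om \ae P,
  (fun r => r%:R^-1 *
     (\sum_(1 <= k < r.+1) llr l th ths (X k om) - r%:R * Hdiv l th ths))
  @ \oo --> 0.
Proof.
pose x w := llr l th ths w - Hdiv l th ths.
have x_bound w : `|x w| <= 2 * \sum_v `|llr l th ths v|.
  rewrite mulr2n mulrDl mul1r (le_trans (ler_normB _ _)) //.
  by rewrite lerD ?norm_llr_le ?norm_Hdiv_le.
have walk_llr r om : walk X x r om =
    \sum_(1 <= k < r.+1) llr l th ths (X k om) - r%:R * Hdiv l th ths.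
  by rewrite /walk sumrB big_add1 /= big_mkord sumr_const card_ord mulr_natl.
have := walk_strong_law X_measurable P_cylinder l_ge0 l_sum1 llr_centered_mean0 x_bound.
by apply: filterS => om; under eq_fun do rewrite walk_llr.
Qed.
End LogLikelihoodRatio.

Theorem lemma3 (R : realType) (d : measure_display) (Omega : measurableType d)
  (P : probability Omega R)
  (n phi f chi : nat) (Th : finType) (ths : Th)
  (S : 'I_(n - phi) -> finType)
  (l : forall j : 'I_(n - phi), Th -> S j -> R)
  (s : forall j : 'I_(n - phi), nat -> Omega -> S j)
  (A : Omega -> nat -> 'M[R]_(n - phi))
  (pi : Omega -> nat -> 'rV[R]_(n - phi))
  (beta : R) :
  (phi <= f)%N ->
  (0 < chi)%N ->
  (* likelihoods: probability distributions with full support *)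
  (forall j th w, 0 < l j th w) ->
  (forall j th, \sum_(w : S j) l j th w = 1) ->
  (* signals: independent across agents and iterations, s^j_k ~ l_j(.|ths) *)
  iid_signals P l ths s ->
  (* matrix representation: row-stochastic A[t], stochastic pi(r), rate *)
  0 < beta -> beta <= 1 ->
  (forall om t, (1 <= t)%N -> row_stochastic (A om t)) ->
  (forall om r, (1 <= r)%N -> stochastic_row (pi om r)) ->
  (forall om t r i j, (1 <= r)%N -> (r <= t)%N ->
     `| Phi_of (A om) t r i j - pi om r 0 j |
       <= (1 - beta ^+ (chi * (n - phi))) ^+
            ((t - r + 1 + (chi * (n - phi)) - 1) %/ (chi * (n - phi)))) ->
  forall (i : 'I_(n - phi)) (th : Th), th <> ths ->
  {ae P, forall om,
     (fun t : nat =>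
        (t%:R ^+ 2)^-1 *
        \sum_(1 <= r < t.+1)
          (\sum_(j < n - phi) Phi_of (A om) t r.+1 i j *
              \sum_(1 <= k < r.+1) llr (l j) th ths (s j k om)
           - r%:R * \sum_(j < n - phi) pi om r.+1 0 j * Hdiv (l j) th ths))
     @ \oo --> 0}.
Proof.
move=> _ chi_gt0 l_gt0 l_sum1 s_iid beta_gt0 beta_le1 _ pi_stoch Phi_mix i th _.
set nu := (chi * (n - phi))%N; set g := 1 - beta ^+ nu.
have nu_gt0 : (0 < nu)%N by rewrite muln_gt0 chi_gt0 (leq_ltn_trans _ (ltn_ord i)).
have g_ge0 : 0 <= g by rewrite subr_ge0 exprn_ile1 // ltW.
have g_lt1 : g < 1 by rewrite ltrBlDr ltrDl exprn_gt0.
have /filter_forall llr_avg j := llr_strong_law th (fun w => ltW (l_gt0 j ths w))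
  (l_sum1 j ths) (s_iid.1 j) (iid_signals_cylinder s_iid j).
apply: filterS llr_avg => om llr_avg.
apply: (@consensus_average_cvg0 _ _ (fun t r j => Phi_of (A om) t r.+1 i j)
  (fun r j => pi om r.+1 0 j) _ _ (fun j => \sum_w `|llr (l j) th ths w|)
  (fun m => g ^+ ((m + nu - 1) %/ nu))) => //.
- exact: cvg_expr_ceil_div.
- exact: Phi_of_mixing (pi_stoch om) (fun t r j => Phi_mix om t r i j).
- move=> r j.
  have /andP[pi_ge0 pi_le1] := stochastic_row_entry j (pi_stoch om r.+1 isT).
  by rewrite ger0_norm.
- by move=> j r; apply: norm_sum_llr_le => w; apply: ltW.
Qed.
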